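(* Let $\mathcal M\in\{\mathcal M_1,\mathcal M_2,\mathcal M_3,\mathcal M_4\}$ and $n\ge 2$. Then $m_{\mathrm{opt}}(n;\mathcal M)>1$, i.e. there is some $m\in\{2,\dots,n\}$ with $F(m;n)<F(1;n)$.
   Context: Let $n\ge 1$, let $\mathbf X=\{X_1,\dots,X_n\}$ with the uniform probability measure. For $1\le m\le n$ let $\mathcal X_m$ be the set of finite sequences $\chi=(\chi_1,\dots,\chi_\ell)$ of elements of $\mathbf X$ such that $\{\chi_1,\dots,\chi_\ell\}$ has exactly $m$ elements and $\chi_\ell\ne\chi_i$ for all $i<\ell$; write $\ell=\ell(\chi)$, give $\chi$ weight $n^{-\ell(\chi)}$ (this is a probability measure on $\mathcal X_m$), and for $f:\mathcal X_m\to\mathbb R$ write $E_m[f]=\sum_{\chi\in\mathcal X_m}f(\chi)n^{-\ell(\chi)}$. For $\chi\in\mathcal X_m$ and $0\le j\le m$ let $t_j(\chi)$ be the least $t\ge0$ with $|\{\chi_1,\dots,\chi_t\}|=j$ (so $t_0=0$), and for $1\le j\le m-1$ let $\tau_j(\chi)=t_{j+1}(\chi)-t_j(\chi)-1$. Put $b(j)=(1+\frac1j)\log_2(j+1)-1$ ($j\ge1$), $b_f(j)=\log_2(j+1)$ ($j\ge0$), $s(j)=\frac{j+1}2$. The four models specify functions $s_{\mathcal L}(k)$ (cost of a search for an object on the sorted list when the list has $k$ objects), $s_{\mathcal P}(j)$ (cost of a search for an object in the pile when the pile has $j$ objects) and the cleanup cost $C_m$: $\mathcal M_1$: $s_{\mathcal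 L}(k)=b(k)$, $s_{\mathcal P}(j)=b_f(n-j)+s(j)$, $C_m=\sum_{j=1}^m b_f(n-j)$; $\mathcal M_2$: $s_{\mathcal L}(k)=b(n)$, $s_{\mathcal P}(j)=b_f(n)+s(j)$, $C_m=m\,b(n)$; $\mathcal M_3$: $s_{\mathcal L}(k)=b(k)$, $s_{\mathcal P}(j)=s(j)$, $C_m=\sum_{j=1}^m b_f(n-j)$; $\mathcal M_4$: $s_{\mathcal L}(k)=b(n)$, $s_{\mathcal P}(j)=s(j)$, $C_m=m\,b(n)$. The average total cost is $F(m;n)=E_m[1/\ell]\Big(\sum_{j=0}^{m-1}s_{\mathcal L}(n-j)+C_m\Big)+\sum_{j=1}^{m-1}E_m[\tau_j/\ell]\,s_{\mathcal P}(j)$, and $m_{\mathrm{opt}}(n;\mathcal M)$ is the smallest $m\in\{1,\dots,n\}$ minimizing $F(m;n)$. *)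

From Stdlib Require Import Reals Lra List Arith.
Import ListNotations.
Open Scope R_scope.

(* The alphabet X = {X_1,...,X_n} is represented by {0,...,n-1}. *)

Fixpoint all_seqs (n L : nat) : list (list nat) :=
  match L with
  | O => [ [] ]
  | S L' => flat_map (fun s => map (fun x => x :: s) (seq 0 n)) (all_seqs n L')
  end.

Definition ndistinct (l : list nat) : nat := length (nodup Nat.eq_dec l).

Definition last_new (l : list nat) : bool :=
  match rev l with
  | x :: r => negb (existsb (Nat.eqb x) r)
  | [] => false
  end.

Definition inX (m : nat) (l : list nat) : bool :=
  Nat.eqb (ndistinct l) m && last_new l.

Definition t_idx (j : nat) (l : list nat) : nat :=
  match find (fun t => Nat.eqb (ndistinct (firstn t l)) j) (seq 0 (S (length l))) with
  | Some t => t
  | None => O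
  end.

Definition tau (j : nat) (l : list nat) : nat := (t_idx (S j) l - t_idx j l - 1)%nat.

(* E_m[f] = v : the series sum_{chi in X_m} f(chi) n^{-l(chi)}, grouped by the
   length L = l(chi), converges to v. *)
Definition E_is (n m : nat) (f : list nat -> R) (v : R) : Prop :=
  infinite_sum
    (fun L => fold_right Rplus 0
       (map (fun l => f l * / (INR n) ^ L) (filter (inX m) (all_seqs n L))))
    v.

Definition log2 (x : R) : R := ln x / ln 2.
Definition b (j : nat) : R := (1 + / INR j) * log2 (INR j + 1) - 1.
Definition b_f (j : nat) : R := log2 (INR j + 1).
Definition s (j : nat) : R := (INR j + 1) / 2.

Inductive Model := M1 | M2 | M3 | M4.

Definition sumR (l : list nat) (f : nat -> R) : R :=
  fold_right (fun j acc => f j + acc) 0 l.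

Definition sL (M : Model) (n k : nat) : R :=
  match M with
  | M1 | M3 => b k
  | M2 | M4 => b n
  end.

Definition sP (M : Model) (n j : nat) : R :=
  match M with
  | M1 => b_f (n - j) + s j
  | M2 => b_f n + s j
  | M3 | M4 => s j
  end.

Definition Ccost (M : Model) (n m : nat) : R :=
  match M with
  | M1 | M3 => sumR (seq 1 m) (fun j => b_f (n - j))
  | M2 | M4 => INR m * b n
  end.

Definition F_is (M : Model) (n m : nat) (v : R) : Prop :=
  exists (e : R) (t : nat -> R),
    E_is n m (fun l => / INR (length l)) e /\
    (forall j, (1 <= j <= m - 1)%nat ->
       E_is n m (fun l => INR (tau j l) / INR (length l)) (t j)) /\
    v = e * (sumR (seq 0 m) (fun j => sL M n (n - j)) + Ccost M n m)
        + sumR (seq 1 (m - 1)) (fun j => t j * sP M n j).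

(* F(1;n) is the constant A_1 = s_L(n) + C_1: the only sequences in X_1 are
   the n one-letter words, so E_1[1/l] = 1.  For m = 2 we have
   F(2;n) = E_2[(A_2 + P tau_1)/l] with P = s_P(1).  Every chi in X_2 has the
   shape a...ac with a <> c and length L >= 2, and tau_1(chi) <= L - 2; since
   A_2 <= 2 A_1 and 0 <= P < A_1 (elementary inequalities on log2 for each of
   the four models), the integrand is <= A_1, strictly when L >= 3.  There are
   at most n(n-1) words in X_2 of length L, whose total weight
   n(n-1) / n^L sums to 1 over L >= 2.  A termwise comparison of series, strict
   at L = 3, yields F(2;n) < A_1 = F(1;n). *)

From Stdlib Require Import Reals List Arith.
From Stdlib Require Import Lra Lia FinFun.
Import ListNotations.
Open Scope R_scope.

(** * Words over the alphabet {0,...,n-1} *)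

Lemma all_seqs_spec n L l :
  In l (all_seqs n L) <-> (length l = L /\ forall x, In x l -> (x < n)%nat).
Proof.
  revert l; induction L as [|L IH]; intro l; simpl.
  - split.
    + intros [<-|[]]; split; [reflexivity | intros x []].
    + intros [H _]; left; destruct l; [reflexivity | discriminate].
  - rewrite in_flat_map. split.
    + intros [s [Hs Hl]]. apply in_map_iff in Hl. destruct Hl as [x [<- Hx]].
      apply IH in Hs. destruct Hs as [Hlen Hbound]. apply in_seq in Hx.
      split; [simpl; congruence |]. intros y [<-|Hy]; [lia | auto].
    + intros [Hlen Hbound]. destruct l as [|x s]; [discriminate |].
      exists s. split.
      * apply IH. split; [simpl in Hlen; lia |]. intros y Hy; apply Hbound; right; auto.
      * apply in_map_iff. exists x. split; [reflexivity |]. apply in_seq.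
        specialize (Hbound x (or_introl eq_refl)). lia.
Qed.

Lemma all_seqs_nodup n L : NoDup (all_seqs n L).
Proof.
  induction L as [|L IH]; simpl.
  - constructor; [intros [] | constructor].
  - induction IH as [|s A Hs HA IHA]; simpl; [constructor |].
    apply NoDup_app.
    + apply Injective_map_NoDup; [intros x y H; injection H; auto | apply seq_NoDup].
    + exact IHA.
    + intros w Hw Hw'. apply in_map_iff in Hw. destruct Hw as [x [<- _]].
      apply in_flat_map in Hw'. destruct Hw' as [s' [Hs' Hw']]. apply in_map_iff in Hw'.
      destruct Hw' as [y [Heq _]]. injection Heq as -> ->. contradiction.
Qed.

Lemma ndistinct_ge (d l : list nat) : NoDup d -> incl d l -> (length d <= ndistinct l)%nat.
Proof.
  intros Hd Hincl. apply NoDup_incl_length; [exact Hd |].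
  intros x Hx. apply nodup_In, Hincl, Hx.
Qed.

Lemma last_new_app s y : last_new (s ++ [y]) = true -> ~ In y s.
Proof.
  unfold last_new. rewrite rev_app_distr. simpl.
  intros H Hin. apply Bool.negb_true_iff in H.
  assert (Hex : existsb (Nat.eqb y) (rev s) = true).
  { apply existsb_exists; exists y; split; [apply -> in_rev; exact Hin | apply Nat.eqb_refl]. }
  congruence.
Qed.

Lemma inX_split m l : inX m l = true ->
  exists s y, l = s ++ [y] /\ ~ In y s /\ ndistinct (s ++ [y]) = m.
Proof.
  unfold inX. intros H. apply Bool.andb_true_iff in H. destruct H as [Hm Hnew].
  apply Nat.eqb_eq in Hm.
  destruct l as [|a l']; [discriminate |].
  destruct (exists_last (l := a :: l') ltac:(discriminate)) as [s [y Heq]].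
  rewrite Heq in Hm, Hnew |- *. exists s, y. auto using last_new_app.
Qed.

Lemma inX1_length l : inX 1 l = true -> length l = 1%nat.
Proof.
  intros H. destruct (inX_split 1 l H) as [s [y [-> [Hy Hm]]]].
  destruct s as [|x s]; [reflexivity | exfalso].
  assert (H2 : (length [x; y] <= ndistinct ((x :: s) ++ [y]))%nat).
  { apply ndistinct_ge.
    - constructor; [intros [E|[]]; subst; apply Hy; left; reflexivity |].
      constructor; [intros [] | constructor].
    - intros z [<-|[<-|[]]]; apply in_or_app; [left; left | right; left]; reflexivity. }
  cbn [length] in H2. lia.
Qed.

Lemma inX2_shape l : inX 2 l = true ->
  exists a c, a <> c /\ l = repeat a (length l - 1) ++ [c] /\ (2 <= length l)%nat.
Proof.
  intros H. destruct (inX_split 2 l H) as [s [c [-> [Hc Hm]]]].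
  destruct s as [|a s]; [simpl in Hm; discriminate |].
  assert (Hconst : forall x, In x (a :: s) -> x = a).
  { intros x Hx. destruct (Nat.eq_dec x a) as [|Hxa]; [assumption | exfalso].
    assert (H3 : (length [x; a; c] <= ndistinct ((a :: s) ++ [c]))%nat).
    { apply ndistinct_ge.
      - constructor; [intros [E|[E|[]]]; subst; auto |].
        constructor; [intros [E|[]]; subst; apply Hc; left; reflexivity |].
        constructor; [intros [] | constructor].
      - intros z [<-|[<-|[<-|[]]]]; apply in_or_app;
          [left; exact Hx | left; left; reflexivity | right; left; reflexivity]. }
    cbn [length] in H3. lia. }
  exists a, c. split; [intros ->; apply Hc; left; reflexivity |].
  rewrite length_app, Nat.add_sub. split; [| simpl; lia].
  f_equal. apply Forall_eq_repeat, Forall_forall. intros x Hx. symmetry. auto.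
Qed.

Definition X2_words (n L : nat) : list (list nat) := filter (inX 2) (all_seqs n L).

Lemma X2_words_length n L l : In l (X2_words n L) -> length l = L /\ (2 <= L)%nat.
Proof.
  intros H. apply filter_In in H. destruct H as [Hall HX].
  apply all_seqs_spec in Hall. destruct Hall as [Hlen _].
  destruct (inX2_shape l HX) as [_ [_ [_ [_ H2]]]]. lia.
Qed.

(* The word 0^(L-1) 1 shows that X_2 has words of every length L >= 2. *)
Lemma X2_words_nonempty n L : (2 <= n)%nat -> (2 <= L)%nat -> X2_words n L <> [].
Proof.
  intros Hn HL Hnil.
  assert (Hin : In (repeat 0%nat (L - 1) ++ [1%nat]) (X2_words n L)).
  { apply filter_In. split.
    - apply all_seqs_spec. rewrite length_app, repeat_length. simpl. split; [lia |].
      intros x Hx. apply in_app_or in Hx. destruct Hx as [Hx|[<-|[]]]; [| lia].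
      apply repeat_spec in Hx. lia.
    - destruct L as [|[|k]]; [lia | lia |]. simpl (S (S k) - 1)%nat.
      unfold inX, last_new, ndistinct. apply Bool.andb_true_iff. split.
      + assert (Hnd : forall j, nodup Nat.eq_dec (repeat 0%nat (S j) ++ [1%nat]) = [0%nat; 1%nat]).
        { induction j as [|j IH]; [reflexivity |].
          change (repeat 0%nat (S (S j)) ++ [1%nat]) with (0%nat :: (repeat 0%nat (S j) ++ [1%nat])).
          assert (Hdup : forall w, In 0%nat w -> nodup Nat.eq_dec (0%nat :: w) = nodup Nat.eq_dec w)
            by (intros w Hw; simpl; destruct in_dec; tauto).
          rewrite Hdup by (left; reflexivity). exact IH. }
        rewrite Hnd. reflexivity.
      + rewrite rev_app_distr, rev_repeat. simpl.
        clear HL Hnil. induction k as [|k IH]; [reflexivity | exact IH]. }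
  rewrite Hnil in Hin. destruct Hin.
Qed.

Lemma length_flat_map_le {A B} (f : A -> list B) k l :
  (forall a, In a l -> (length (f a) <= k)%nat) -> (length (flat_map f l) <= length l * k)%nat.
Proof.
  intros H. induction l as [|a l IH]; simpl; [lia |]. rewrite length_app.
  assert (Ha := H a (or_introl eq_refl)).
  assert (Hl : (length (flat_map f l) <= length l * k)%nat) by (apply IH; intros; apply H; right; auto).
  lia.
Qed.

(* There are at most n(n-1) words of length L in X_2: they inject into the
   list of all a^(L-1) c with a < n and c <> a. *)
Lemma X2_words_count n L : (length (X2_words n L) <= n * (n - 1))%nat.
Proof.
  set (cands := flat_map (fun a => map (fun c => repeat a (L - 1) ++ [c])
                                      (remove Nat.eq_dec a (seq 0 n))) (seq 0 n)).
  assert (Hcands : (length cands <= n * (n - 1))%nat).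
  { rewrite <- (length_seq n 0) at 1. apply length_flat_map_le. intros a Ha.
    rewrite length_map.
    assert (Hlt := remove_length_lt Nat.eq_dec (seq 0 n) a Ha).
    rewrite length_seq in Hlt. lia. }
  etransitivity; [| exact Hcands].
  apply NoDup_incl_length; [apply NoDup_filter, all_seqs_nodup |].
  intros l Hl. assert (HL := X2_words_length n L l Hl).
  apply filter_In in Hl. destruct Hl as [Hall HX].
  apply all_seqs_spec in Hall. destruct Hall as [Hlen Hbound].
  destruct (inX2_shape l HX) as [a [c [Hac [Heq _]]]].
  rewrite Hlen in Heq.
  assert (Ha : (a < n)%nat).
  { apply Hbound. rewrite Heq. apply in_or_app. left.
    destruct (L - 1)%nat eqn:E; [lia | left; reflexivity]. }
  assert (Hc : (c < n)%nat) by (apply Hbound; rewrite Heq; apply in_or_app; right; left; reflexivity).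
  apply in_flat_map. exists a. split; [apply in_seq; lia |].
  apply in_map_iff. exists c. split; [symmetry; exact Heq |].
  apply in_in_remove; [congruence | apply in_seq; lia].
Qed.

(* In a nonempty word the first letter is new at time 1 and the second distinct
   letter appears by time l, hence tau_1 <= l - 2. *)
Lemma tau1_le l : (1 <= length l)%nat -> (tau 1 l <= length l - 2)%nat.
Proof.
  intros Hl. unfold tau.
  assert (Ht1 : (1 <= t_idx 1 l)%nat).
  { unfold t_idx. destruct (find _ _) as [t|] eqn:E.
    - apply find_some in E. destruct E as [_ E]. destruct t; [discriminate | lia].
    - assert (Hnone := find_none _ _ E 1%nat ltac:(apply in_seq; lia)).
      destruct l as [|x l']; [simpl in Hl; lia | discriminate]. }
  assert (Ht2 : (t_idx 2 l <= length l)%nat).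
  { unfold t_idx. destruct (find _ _) as [t|] eqn:E; [| lia].
    apply find_some in E. destruct E as [E _]. apply in_seq in E. lia. }
  lia.
Qed.

Notation list_sum_R f l := (fold_right Rplus 0 (map f l)).

Lemma list_sum_le {A} (f : A -> R) c l : (forall x, In x l -> f x <= c) ->
  list_sum_R f l <= INR (length l) * c.
Proof.
  induction l as [|a l IH]; intros H; cbn [map fold_right length]; [simpl; lra |].
  assert (Ha := H a (or_introl eq_refl)).
  assert (Hl : list_sum_R f l <= INR (length l) * c) by (apply IH; intros; apply H; right; auto).
  rewrite S_INR. lra.
Qed.

Lemma list_sum_lt {A} (f : A -> R) c l : l <> [] -> (forall x, In x l -> f x < c) ->
  list_sum_R f l < INR (length l) * c.
Proof.
  destruct l as [|a l]; intros Hne H; [contradiction |]. cbn [map fold_right length].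
  assert (Ha := H a (or_introl eq_refl)).
  assert (Hl : list_sum_R f l <= INR (length l) * c)
    by (apply list_sum_le; intros; apply Rlt_le, H; right; auto).
  rewrite S_INR. lra.
Qed.

Lemma list_sum_nonneg {A} (f : A -> R) l : (forall x, In x l -> 0 <= f x) -> 0 <= list_sum_R f l.
Proof.
  induction l as [|a l IH]; intros H; cbn [map fold_right]; [lra |].
  assert (Ha := H a (or_introl eq_refl)).
  assert (Hl : 0 <= list_sum_R f l) by (apply IH; intros; apply H; right; auto).
  lra.
Qed.

Lemma list_sum_const {A} (f : A -> R) c l : (forall x, In x l -> f x = c) ->
  list_sum_R f l = INR (length l) * c.
Proof.
  induction l as [|a l IH]; intros H; cbn [map fold_right length]; [simpl; ring |].
  rewrite H, IH by (try (intros; apply H); simpl; auto). rewrite S_INR. ring.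
Qed.

Lemma list_sum_lin {A} (f g : A -> R) a c l :
  a * list_sum_R f l + c * list_sum_R g l = list_sum_R (fun x => a * f x + c * g x) l.
Proof. induction l as [|x l IH]; simpl; [ring |]. rewrite <- IH. ring. Qed.

(** * The terms of the series defining E_m *)

Definition E_term (n m : nat) (f : list nat -> R) (L : nat) : R :=
  list_sum_R (fun l => f l * / INR n ^ L) (filter (inX m) (all_seqs n L)).

Lemma E_term_nonneg n m f L : (2 <= n)%nat -> (forall l, 0 <= f l) -> 0 <= E_term n m f L.
Proof.
  intros Hn Hf. apply list_sum_nonneg. intros l _. apply Rmult_le_pos; [apply Hf |].
  apply Rlt_le, Rinv_0_lt_compat, pow_lt, lt_0_INR. lia.
Qed.

Lemma E_term_lin n m f g a c L :
  a * E_term n m f L + c * E_term n m g L = E_term n m (fun l => a * f l + c * g l) L.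
Proof.
  unfold E_term. rewrite list_sum_lin. f_equal. apply map_ext. intros l. ring.
Qed.

(* Upper bound n(n-1)/n^L for the total weight of the words of length L in X_2. *)
Definition mass2 (n L : nat) : R := if (L <? 2)%nat then 0 else INR (n * (n - 1)) * / INR n ^ L.

Lemma X2_weight_le n L beta : (2 <= n)%nat -> 0 <= beta ->
  INR (length (X2_words n L)) * (beta * / INR n ^ L) <= beta * (INR (n * (n - 1)) * / INR n ^ L).
Proof.
  intros Hn Hbeta. assert (Hc := le_INR _ _ (X2_words_count n L)).
  assert (Hw : 0 <= / INR n ^ L) by (apply Rlt_le, Rinv_0_lt_compat, pow_lt, lt_0_INR; lia).
  replace (beta * (INR (n * (n - 1)) * / INR n ^ L))
    with (INR (n * (n - 1)) * (beta * / INR n ^ L)) by ring.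
  apply Rmult_le_compat_r; [apply Rmult_le_pos |]; lra.
Qed.

Lemma E2_term_le n f beta L : (2 <= n)%nat -> 0 <= beta ->
  (forall l, In l (X2_words n L) -> f l <= beta) -> E_term n 2 f L <= beta * mass2 n L.
Proof.
  intros Hn Hbeta Hf. unfold E_term, mass2. fold (X2_words n L).
  assert (Hw : 0 < / INR n ^ L) by (apply Rinv_0_lt_compat, pow_lt, lt_0_INR; lia).
  destruct (Nat.ltb_spec L 2) as [HL|HL].
  - destruct (X2_words n L) as [|l ls] eqn:E; [simpl; lra |].
    exfalso. assert (Hin : In l (X2_words n L)) by (rewrite E; left; reflexivity).
    apply X2_words_length in Hin. lia.
  - eapply Rle_trans; [| apply X2_weight_le; assumption].
    apply list_sum_le. intros l Hl. apply Rmult_le_compat_r; [lra | apply Hf, Hl].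
Qed.

Lemma E2_term_lt n f beta L : (2 <= n)%nat -> (2 <= L)%nat -> 0 <= beta ->
  (forall l, In l (X2_words n L) -> f l < beta) -> E_term n 2 f L < beta * mass2 n L.
Proof.
  intros Hn HL Hbeta Hf. unfold E_term, mass2. fold (X2_words n L).
  assert (Hw : 0 < / INR n ^ L) by (apply Rinv_0_lt_compat, pow_lt, lt_0_INR; lia).
  destruct (Nat.ltb_spec L 2) as [HL'|_]; [lia |].
  eapply Rlt_le_trans; [| apply X2_weight_le; assumption].
  apply list_sum_lt; [apply X2_words_nonempty; assumption |].
  intros l Hl. apply Rmult_lt_compat_r; [lra | apply Hf, Hl].
Qed.

(** * Convergent series *)

Lemma Un_cv_const c : Un_cv (fun _ => c) c.
Proof. intros eps Heps. exists 0%nat. intros. unfold Rdist. rewrite Rminus_diag, Rabs_R0. lra. Qed.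

Lemma infinite_sum_scal u U a : infinite_sum u U -> infinite_sum (fun L => a * u L) (a * U).
Proof.
  intros Hu. apply (Un_cv_ext (fun K => a * sum_f_R0 u K)).
  - intros K. rewrite scal_sum. apply sum_eq. intros. ring.
  - apply CV_mult; [apply Un_cv_const | exact Hu].
Qed.

Lemma infinite_sum_plus u v U V :
  infinite_sum u U -> infinite_sum v V -> infinite_sum (fun L => u L + v L) (U + V).
Proof.
  intros Hu Hv. apply (Un_cv_ext (fun K => sum_f_R0 u K + sum_f_R0 v K)).
  - intros K. symmetry. apply sum_plus.
  - apply CV_plus; assumption.
Qed.

Lemma Un_cv_le_eventually u l M N : Un_cv u l -> (forall K, (N <= K)%nat -> u K <= M) -> l <= M.
Proof.
  intros Hu Hbound. destruct (Rle_lt_dec l M) as [|Hlt]; [assumption | exfalso].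
  destruct (Hu (l - M)) as [N0 HN0]; [lra |].
  specialize (HN0 (max N0 N) (Nat.le_max_l _ _)).
  specialize (Hbound (max N0 N) (Nat.le_max_r _ _)).
  unfold Rdist in HN0. apply Rabs_def2 in HN0. lra.
Qed.

Lemma infinite_sum_lt u v U V k : (forall L, u L <= v L) -> u k < v k ->
  infinite_sum u U -> infinite_sum v V -> U < V.
Proof.
  intros Hle Hlt Hu Hv.
  assert (Hpartial : forall K, (k <= K)%nat -> sum_f_R0 u K - sum_f_R0 v K <= u k - v k).
  { induction K as [|K IH]; intros HK.
    - assert (Hk : k = 0%nat) by lia. subst k. simpl. lra.
    - rewrite !tech5. assert (HK1 := Hle (S K)). destruct (Nat.eq_dec k (S K)) as [->|Hne].
      + assert (Hsum : sum_f_R0 u K <= sum_f_R0 v K) by (apply sum_growing; exact Hle).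
        lra.
      + specialize (IH ltac:(lia)). lra. }
  assert (Hlim := Un_cv_le_eventually _ _ _ _ (CV_minus _ _ _ _ Hu Hv) Hpartial).
  lra.
Qed.

Lemma mass2_partial_sum n : (2 <= n)%nat -> forall K, sum_f_R0 (mass2 n) (S K) = 1 - (/ INR n) ^ K.
Proof.
  intros Hn. assert (HN : INR n <> 0) by (apply not_0_INR; lia).
  induction K as [|K IH].
  - unfold mass2. simpl. ring.
  - rewrite tech5, IH. unfold mass2. destruct (Nat.ltb_spec (S (S K)) 2); [lia |].
    rewrite mult_INR, minus_INR by lia. rewrite <- pow_inv. simpl pow. simpl INR. field. exact HN.
Qed.

Lemma mass2_sum n : (2 <= n)%nat -> infinite_sum (mass2 n) 1.
Proof.
  intros Hn eps Heps.
  assert (Hr : Rabs (/ INR n) < 1).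
  { assert (H2 : 2 <= INR n) by (apply (le_INR 2); exact Hn).
    rewrite Rabs_right by (apply Rle_ge, Rlt_le, Rinv_0_lt_compat; lra).
    rewrite <- Rinv_1. apply Rinv_lt_contravar; lra. }
  destruct (pow_lt_1_zero _ Hr eps Heps) as [N0 HN0].
  exists (S N0). intros k Hk. destruct k as [|k]; [lia |].
  rewrite mass2_partial_sum by exact Hn. unfold Rdist.
  replace (1 - (/ INR n) ^ k - 1) with (- ((/ INR n) ^ k)) by ring.
  rewrite Rabs_Ropp. apply HN0. lia.
Qed.

Lemma E2_converges n f : (2 <= n)%nat -> (forall l, 0 <= f l) ->
  (forall L l, In l (X2_words n L) -> f l <= 1) -> exists v, E_is n 2 f v.
Proof.
  intros Hn Hpos Hle1.
  assert (Hcmp : forall L, 0 <= E_term n 2 f L <= mass2 n L).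
  { intros L. split; [apply E_term_nonneg; assumption |].
    rewrite <- (Rmult_1_l (mass2 n L)). apply E2_term_le; [exact Hn | lra | apply Hle1]. }
  destruct (Rseries_CV_comp _ _ Hcmp (exist _ 1 (mass2_sum n Hn))) as [v Hv].
  exists v. exact Hv.
Qed.

(** * Inequalities on the cost functions *)

Lemma ln2_pos : 0 < ln 2.
Proof. assert (H := ln_lt_2). lra. Qed.

Lemma ln_le_sub1 y : 0 < y -> ln y <= y - 1.
Proof. intros Hy. assert (E := exp_ineq1_le (ln y)). rewrite exp_ln in E by exact Hy. lra. Qed.

Lemma ln_compare_pow a x k m : 0 < a -> 0 < x -> a ^ k < x ^ m -> INR k * ln a < INR m * ln x.
Proof.
  intros Ha Hx H. rewrite <- !ln_pow by assumption.
  apply ln_increasing; [apply pow_lt; exact Ha | exact H].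
Qed.

(* 4^n < (n+1)^(n+1), i.e. 2 n ln 2 < (n+1) ln (n+1). *)
Lemma ln_bound_b n : (2 <= n)%nat -> 2 * INR n * ln 2 < (INR n + 1) * ln (INR n + 1).
Proof.
  intros Hn. assert (HN : 2 <= INR n) by (apply (le_INR 2); exact Hn).
  assert (Hpow : 2 ^ (2 * n) < (INR n + 1) ^ (n + 1)).
  { destruct (Nat.eq_dec n 2) as [->|Hne]; [simpl; lra |].
    assert (H3 : 3 <= INR n) by (replace 3 with (INR 3) by (simpl; ring); apply le_INR; lia).
    rewrite pow_mult. replace (2 ^ 2) with 4 by ring.
    apply Rle_lt_trans with ((INR n + 1) ^ n).
    - apply pow_incr. lra.
    - apply Rlt_pow; [lra | lia]. }
  apply ln_compare_pow in Hpow; [| lra | lra].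
  rewrite mult_INR, plus_INR in Hpow. simpl INR in Hpow. lra.
Qed.

(* 8^n < (n+1)^(n+2), i.e. 3 n ln 2 < (n+2) ln (n+1). *)
Lemma ln_bound_b_f n : (2 <= n)%nat -> 3 * INR n * ln 2 < (INR n + 2) * ln (INR n + 1).
Proof.
  intros Hn. assert (HN : 2 <= INR n) by (apply (le_INR 2); exact Hn).
  assert (Hpow : 2 ^ (3 * n) < (INR n + 1) ^ (n + 2)).
  { destruct (le_lt_dec 7 n) as [H7|H7].
    - assert (HN7 : 7 <= INR n) by (replace 7 with (INR 7) by (simpl; ring); apply le_INR; lia).
      rewrite pow_mult. replace (2 ^ 3) with 8 by ring.
      apply Rle_lt_trans with ((INR n + 1) ^ n).
      + apply pow_incr. lra.
      + apply Rlt_pow; [lra | lia].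
    - assert (Hsmall : (n = 2 \/ n = 3 \/ n = 4 \/ n = 5 \/ n = 6)%nat) by lia.
      destruct Hsmall as [-> | [-> | [-> | [-> | ->]]]]; rewrite INR_IZR_INZ; simpl; lra. }
  apply ln_compare_pow in Hpow; [| lra | lra].
  rewrite mult_INR, plus_INR in Hpow. simpl INR in Hpow. lra.
Qed.

Lemma b_gt_1 n : (2 <= n)%nat -> 1 < b n.
Proof.
  intros Hn. assert (HN : 2 <= INR n) by (apply (le_INR 2); exact Hn).
  assert (Hl2 := ln2_pos). assert (K := ln_bound_b n Hn).
  unfold b, log2.
  assert (E : (1 + / INR n) * (ln (INR n + 1) / ln 2) - 1 - 1 =
              ((INR n + 1) * ln (INR n + 1) - 2 * INR n * ln 2) / (INR n * ln 2)) by (field; lra).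
  assert (Hpos : 0 < ((INR n + 1) * ln (INR n + 1) - 2 * INR n * ln 2) / (INR n * ln 2))
    by (apply Rdiv_lt_0_compat; [lra | apply Rmult_lt_0_compat; lra]).
  lra.
Qed.

Lemma b_f_lt_b n : (2 <= n)%nat -> b_f n + 1 < 2 * b n.
Proof.
  intros Hn. assert (HN : 2 <= INR n) by (apply (le_INR 2); exact Hn).
  assert (Hl2 := ln2_pos). assert (K := ln_bound_b_f n Hn).
  unfold b, b_f, log2.
  assert (E : 2 * ((1 + / INR n) * (ln (INR n + 1) / ln 2) - 1) - (ln (INR n + 1) / ln 2 + 1) =
              ((INR n + 2) * ln (INR n + 1) - 3 * INR n * ln 2) / (INR n * ln 2)) by (field; lra).
  assert (Hpos : 0 < ((INR n + 2) * ln (INR n + 1) - 3 * INR n * ln 2) / (INR n * ln 2))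
    by (apply Rdiv_lt_0_compat; [lra | apply Rmult_lt_0_compat; lra]).
  lra.
Qed.

Lemma ln_step N : 2 <= N -> ln N / (N - 1) + ln (N - 1) <= ln (N + 1) + ln (N + 1) / N.
Proof.
  intros HN.
  assert (Ha0 : 0 <= ln N) by (rewrite <- ln_1; left; apply ln_increasing; lra).
  assert (Hac : ln N <= ln (N + 1)) by (left; apply ln_increasing; lra).
  assert (HaN : ln N <= N - 1) by (apply ln_le_sub1; lra).
  assert (Hd : ln (N - 1) - ln (N + 1) <= - (2 / (N + 1))).
  { assert (E : ln (N - 1) - ln (N + 1) = ln ((N - 1) / (N + 1))).
    { unfold Rdiv. rewrite ln_mult by (try apply Rinv_0_lt_compat; lra).
      rewrite ln_Rinv by lra. ring. }
    rewrite E. eapply Rle_trans; [apply ln_le_sub1; apply Rdiv_lt_0_compat; lra |].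
    right. field. lra. }
  assert (E1 : ln N / (N - 1) = ln N / N + ln N / (N * (N - 1))) by (field; lra).
  assert (H1 : ln N / N <= ln (N + 1) / N)
    by (apply Rmult_le_compat_r; [left; apply Rinv_0_lt_compat; lra | exact Hac]).
  assert (H2 : ln N / (N * (N - 1)) <= / N).
  { replace (/ N) with ((N - 1) / (N * (N - 1))) by (field; lra).
    apply Rmult_le_compat_r; [left; apply Rinv_0_lt_compat, Rmult_lt_0_compat; lra | exact HaN]. }
  assert (H3 : / N <= 2 / (N + 1)).
  { assert (E : 2 / (N + 1) - / N = (N - 1) / (N * (N + 1))) by (field; lra).
    assert (Hpos : 0 <= (N - 1) / (N * (N + 1)))
      by (apply Rmult_le_pos; [lra | left; apply Rinv_0_lt_compat, Rmult_lt_0_compat; lra]).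
    lra. }
  lra.
Qed.

Lemma b_step n : (2 <= n)%nat -> b (n - 1) + b_f (n - 2) <= b n + b_f (n - 1).
Proof.
  intros Hn. assert (HN : 2 <= INR n) by (apply (le_INR 2); exact Hn).
  assert (Hl2 := ln2_pos).
  unfold b, b_f, log2. rewrite !minus_INR by lia. simpl INR.
  replace (INR n - (1 + 1) + 1) with (INR n - 1) by ring.
  replace (INR n - 1 + 1) with (INR n) by ring.
  assert (K := ln_step (INR n) HN).
  set (N := INR n) in *.
  assert (E : (1 + / N) * (ln (N + 1) / ln 2) - 1 + ln N / ln 2
              - ((1 + / (N - 1)) * (ln N / ln 2) - 1 + ln (N - 1) / ln 2)
              = (ln (N + 1) + ln (N + 1) / N - (ln N / (N - 1) + ln (N - 1))) / ln 2)
    by (field; lra).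
  assert (Hpos : 0 <= (ln (N + 1) + ln (N + 1) / N - (ln N / (N - 1) + ln (N - 1))) / ln 2)
    by (apply Rmult_le_pos; [lra | left; apply Rinv_0_lt_compat; lra]).
  lra.
Qed.

Lemma b_f_nonneg k : 0 <= b_f k.
Proof.
  unfold b_f, log2. assert (Hl2 := ln2_pos).
  apply Rmult_le_pos; [| left; apply Rinv_0_lt_compat; lra].
  assert (Hk := pos_INR k). rewrite <- ln_1.
  destruct (Req_dec (INR k) 0) as [E|E]; [rewrite E, Rplus_0_l; lra |].
  left; apply ln_increasing; lra.
Qed.

(* A_m = sum_{j<m} s_L(n-j) + C_m, the coefficient of E_m[1/l] in F(m;n). *)
Definition list_cost (M : Model) (n m : nat) : R :=
  sumR (seq 0 m) (fun j => sL M n (n - j)) + Ccost M n m.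

Lemma cost_facts M n : (2 <= n)%nat ->
  0 <= sP M n 1 /\ sP M n 1 < list_cost M n 1 /\ list_cost M n 2 <= 2 * list_cost M n 1.
Proof.
  intros Hn. assert (H1 := b_gt_1 n Hn). assert (H2 := b_f_lt_b n Hn). assert (H3 := b_step n Hn).
  assert (H4 := b_f_nonneg (n - 1)). assert (H5 := b_f_nonneg (n - 2)). assert (H6 := b_f_nonneg n).
  unfold list_cost. destruct M; cbn [sumR fold_right seq sL sP Ccost]; rewrite ?Nat.sub_0_r;
    unfold s; simpl INR; lra.
Qed.

(* With the convention / 0 = 0, 1/l is nonnegative even on the empty word. *)
Lemma inv_INR_nonneg k : 0 <= / INR k.
Proof.
  destruct (Nat.eq_dec k 0) as [->|Hk]; [simpl; rewrite Rinv_0; lra |].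
  apply Rlt_le, Rinv_0_lt_compat, lt_0_INR. lia.
Qed.

(* E_1[1/l] = 1: X_1 is made of the n one-letter words, each of weight 1/n. *)
Lemma E1_term n L : (2 <= n)%nat ->
  E_term n 1 (fun l => / INR (length l)) L = if (L =? 1)%nat then 1 else 0.
Proof.
  intros Hn. assert (HN : INR n <> 0) by (apply not_0_INR; lia).
  unfold E_term. destruct (Nat.eqb_spec L 1) as [->|HL].
  - assert (Hall : filter (inX 1) (all_seqs n 1) = all_seqs n 1).
    { apply forallb_filter_id, forallb_forall. intros l Hl.
      apply all_seqs_spec in Hl. destruct Hl as [Hl _].
      destruct l as [|x [|y l]]; try discriminate. reflexivity. }
    rewrite Hall, list_sum_const with (c := / INR n).
    + simpl all_seqs. rewrite app_nil_r, length_map, length_seq. field. exact HN.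
    + intros l Hl. apply all_seqs_spec in Hl. destruct Hl as [-> _]. simpl. field. exact HN.
  - destruct (filter (inX 1) (all_seqs n L)) as [|l ls] eqn:E; [reflexivity | exfalso].
    assert (Hin : In l (filter (inX 1) (all_seqs n L))) by (rewrite E; left; reflexivity).
    apply filter_In in Hin. destruct Hin as [Hall HX].
    apply all_seqs_spec in Hall. apply inX1_length in HX. lia.
Qed.

(* Only the term L = 1 of the series is nonzero. *)
Lemma E1_inv_length n : (2 <= n)%nat -> E_is n 1 (fun l => / INR (length l)) 1.
Proof.
  intros Hn.
  assert (Hpartial : forall k, sum_f_R0 (E_term n 1 (fun l => / INR (length l))) (S k) = 1).
  { induction k as [|k IH].
    - simpl. rewrite !E1_term by exact Hn. simpl. ring.
    - rewrite tech5, IH, E1_term by exact Hn. simpl. ring. }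
  intros eps Heps. exists 1%nat. intros K HK.
  destruct K as [|K]; [lia |]. rewrite Hpartial. unfold Rdist. rewrite Rminus_diag, Rabs_R0. exact Heps.
Qed.

Lemma X2_word_bounds n L l : In l (X2_words n L) ->
  INR (length l) = INR L /\ 2 <= INR L /\ 0 <= INR (tau 1 l) <= INR L - 2.
Proof.
  intros Hl. destruct (X2_words_length n L l Hl) as [Hlen HL].
  assert (Htau := le_INR _ _ (tau1_le l ltac:(lia))).
  rewrite minus_INR in Htau by lia. rewrite Hlen in Htau.
  split; [rewrite Hlen; reflexivity |]. split; [apply (le_INR 2); exact HL |].
  split; [apply pos_INR | simpl INR in Htau; lra].
Qed.

(* E_2[1/l] and E_2[tau_1/l] exist: both integrands lie in [0,1] on X_2. *)
Lemma E2_expectations_exist n : (2 <= n)%nat -> exists e2 t1,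
  E_is n 2 (fun l => / INR (length l)) e2 /\
  E_is n 2 (fun l => INR (tau 1 l) / INR (length l)) t1.
Proof.
  intros Hn.
  destruct (E2_converges n (fun l => / INR (length l)) Hn) as [e2 He2].
  { intros l. apply inv_INR_nonneg. }
  { intros L l Hl. destruct (X2_word_bounds n L l Hl) as [-> [HL _]].
    rewrite <- Rinv_1. apply Rinv_le_contravar; lra. }
  destruct (E2_converges n (fun l => INR (tau 1 l) / INR (length l)) Hn) as [t1 Ht1].
  { intros l. apply Rmult_le_pos; [apply pos_INR | apply inv_INR_nonneg]. }
  { intros L l Hl. destruct (X2_word_bounds n L l Hl) as [-> [HL Htau]].
    apply Rmult_le_reg_r with (INR L); [lra |].
    unfold Rdiv. rewrite Rmult_assoc, Rinv_l, Rmult_1_l by lra. lra. }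
  exists e2, t1. split; assumption.
Qed.

(* The F(2;n)-integrand (A_2 + P t)/x at a word of length x with tau_1 = t is
   at most A_1, strictly when x > 2: it averages A_1 (twice) and P (x-2 times). *)
Lemma F2_integrand_bound A1 A2 P x t : 2 <= x -> 0 <= t <= x - 2 -> 0 <= P < A1 -> A2 <= 2 * A1 ->
  A2 * / x + P * (t / x) <= A1 /\ (2 < x -> A2 * / x + P * (t / x) < A1).
Proof.
  intros Hx Ht HP HA.
  assert (E : A1 - (A2 * / x + P * (t / x)) = (2 * A1 - A2 + (x - 2) * (A1 - P) + P * (x - 2 - t)) / x)
    by (field; lra).
  assert (Hterm : 0 <= P * (x - 2 - t)) by (apply Rmult_le_pos; lra).
  assert (Hinv : 0 < / x) by (apply Rinv_0_lt_compat; lra).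
  split.
  - assert (Hnum : 0 <= (x - 2) * (A1 - P)) by (apply Rmult_le_pos; lra).
    assert (Hq : 0 <= (2 * A1 - A2 + (x - 2) * (A1 - P) + P * (x - 2 - t)) / x)
      by (apply Rmult_le_pos; lra).
    lra.
  - intros Hx2.
    assert (Hnum : 0 < (x - 2) * (A1 - P)) by (apply Rmult_lt_0_compat; lra).
    assert (Hq : 0 < (2 * A1 - A2 + (x - 2) * (A1 - P) + P * (x - 2 - t)) / x)
      by (apply Rmult_lt_0_compat; lra).
    lra.
Qed.

Lemma E2_cost_lt n A1 A2 P e2 t1 : (2 <= n)%nat -> 0 <= P < A1 -> A2 <= 2 * A1 ->
  E_is n 2 (fun l => / INR (length l)) e2 ->
  E_is n 2 (fun l => INR (tau 1 l) / INR (length l)) t1 ->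
  A2 * e2 + P * t1 < A1.
Proof.
  intros Hn HP HA He2 Ht1.
  set (g := fun l => A2 * / INR (length l) + P * (INR (tau 1 l) / INR (length l))).
  assert (Hg : forall L l, In l (X2_words n L) -> g l <= A1 /\ ((3 <= L)%nat -> g l < A1)).
  { intros L l Hl. destruct (X2_word_bounds n L l Hl) as [Hlen [HL Htau]].
    unfold g. rewrite Hlen.
    destruct (F2_integrand_bound A1 A2 P (INR L) (INR (tau 1 l))) as [Hle Hlt]; try assumption.
    split; [exact Hle | intros HL3; apply Hlt].
    apply (lt_INR 2) in HL3. simpl INR in HL3 |- *. lra. }
  assert (Hterm : forall L, A2 * E_term n 2 (fun l => / INR (length l)) L
                           + P * E_term n 2 (fun l => INR (tau 1 l) / INR (length l)) L
                           = E_term n 2 g L) by (intros L; apply E_term_lin).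
  assert (HA1 : 0 <= A1) by lra.
  rewrite <- (Rmult_1_r A1).
  apply (infinite_sum_lt
           (fun L => A2 * E_term n 2 (fun l => / INR (length l)) L
                     + P * E_term n 2 (fun l => INR (tau 1 l) / INR (length l)) L)
           (fun L => A1 * mass2 n L) _ _ 3%nat).
  - intros L. rewrite Hterm. apply E2_term_le; [exact Hn | exact HA1 |].
    intros l Hl. apply (Hg L l Hl).
  - rewrite Hterm. apply E2_term_lt; [exact Hn | lia | exact HA1 |].
    intros l Hl. apply (Hg 3%nat l Hl). lia.
  - apply infinite_sum_plus; apply infinite_sum_scal; assumption.
  - apply infinite_sum_scal, mass2_sum, Hn.
Qed.

Theorem proposition1 (M : Model) (n : nat) (hn : (2 <= n)%nat) :
  exists m : nat, (2 <= m <= n)%nat /\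
    exists F1 Fm : R, F_is M n 1 F1 /\ F_is M n m Fm /\ Fm < F1.
Proof.
  destruct (cost_facts M n hn) as [HP0 [HP HA]].
  destruct (E2_expectations_exist n hn) as [e2 [t1 [He2 Ht1]]].
  assert (Hlt := E2_cost_lt n _ _ _ e2 t1 hn (conj HP0 HP) HA He2 Ht1).
  exists 2%nat. split; [lia |].
  (* F(1;n) = 1 * A_1 and F(2;n) = E_2[1/l] A_2 + E_2[tau_1/l] s_P(1) *)
  exists (1 * list_cost M n 1 + 0), (e2 * list_cost M n 2 + (t1 * sP M n 1 + 0)).
  split; [| split].
  - exists 1, (fun _ => 0). split; [exact (E1_inv_length n hn) |].
    split; [intros j Hj; lia | reflexivity].
  - exists e2, (fun _ => t1). split; [exact He2 |]. split; [| reflexivity].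
    intros j Hj. replace j with 1%nat by lia. exact Ht1.
  - lra.
Qed.
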